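(* On a complex $3$-dimensional torus $T^3$ there is a hermitian metric $\omega$ satisfying \[ \frac{\sqrt{-1}}{2}\,\partial\bar\partial\omega\wedge\omega>0\quad\text{on } T^3 . \]
   Context: A hermitian metric is identified with its positive real $(1,1)$-form $\omega$; a real $(3,3)$-form is $>0$ if it is a positive multiple of $\omega^3$ at every point. *)

From HB Require Import structures.
From mathcomp Require Import all_boot all_order all_algebra.
From mathcomp Require Import all_classical all_reals all_analysis.
From mathcomp Require Import complex.
Set Implicit Arguments.
Unset Strict Implicit.
Unset Printing Implicit Defensive.
Import Order.TTheory GRing.Theory Num.Theory.
Local Open Scope ring_scope.

(* The complex torus T^3 = C^3 / (Z^3 + i Z^3).  A point of C^3 is encoded by
   its real coordinates p : 'rV[R]_6 = 'rV[R]_(3+3), with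
   z_j = p (lshift 3 j) + i p (rshift 3 j)   (j : 'I_3).
   Functions on T^3 are Z^6-periodic functions on R^6 = C^3. *)

Definition ev (R : realType) (k : 'I_6) : 'rV[R]_6 := delta_mx 0 k.

Fixpoint iter_partial (R : realType) (s : seq 'I_6) (f : 'rV[R]_6 -> R)
  : 'rV[R]_6 -> R :=
  match s with
  | [::] => f
  | k :: s' => fun x => 'D_(ev R k) (iter_partial s' f) x
  end.

Definition smoothR (R : realType) (f : 'rV[R]_6 -> R) : Prop :=
  forall (s : seq 'I_6) x, differentiable (iter_partial s f) x.

Definition cfun (R : realType) := 'rV[R]_6 -> R[i].

Definition smoothC (R : realType) (f : cfun R) : Prop :=
  smoothR (fun x => complex.Re (f x)) /\ smoothR (fun x => complex.Im (f x)).

(* invariance under the lattice Z^3 + i Z^3, i.e. f descends to T^3 *)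
Definition periodic (R : realType) (f : cfun R) : Prop :=
  forall (x : 'rV[R]_6) (k : 'I_6), f (x + ev R k) = f x.

Definition dreal (R : realType) (k : 'I_6) (f : cfun R) : cfun R :=
  fun x => Complex ('D_(ev R k) (fun y => complex.Re (f y)) x)
                   ('D_(ev R k) (fun y => complex.Im (f y)) x).

Definition dz (R : realType) (j : 'I_3) (f : cfun R) : cfun R :=
  fun x => (Complex (1/2) 0) *
           (dreal (lshift 3 j) f x - Complex 0 1 * dreal (rshift 3 j) f x).
Definition dzb (R : realType) (j : 'I_3) (f : cfun R) : cfun R :=
  fun x => (Complex (1/2) 0) *
           (dreal (lshift 3 j) f x + Complex 0 1 * dreal (rshift 3 j) f x).

(* The generators of the exterior algebra are indexed by g : 'I_6 = 'I_(3+3):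
   g = lshift 3 j stands for dz_j and g = rshift 3 j for dzbar_j, ordered
   dz_0 < dz_1 < dz_2 < dzbar_0 < dzbar_1 < dzbar_2.  A form a is given by its
   coefficients: a K is the coefficient of the wedge (in increasing order) of
   the generators in K. *)
Definition form (R : realType) := {set 'I_6} -> cfun R.

(* sign of the shuffle putting e_I /\ e_J in increasing order *)
Definition shuffle_sign (R : realType) (I J : {set 'I_6}) : R[i] :=
  (-1) ^+ #|[set p : 'I_6 * 'I_6 | [&& p.1 \in I, p.2 \in J & (p.2 < p.1)%N]]|.

Definition wedge (R : realType) (a b : form R) : form R :=
  fun K x => \sum_(I : {set 'I_6} | I \subset K)
               shuffle_sign R I (K :\: I) * a I x * b (K :\: I) x.

Definition scale_form (R : realType) (c : R[i]) (a : form R) : form R :=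
  fun K x => c * a K x.

(* partial (del) and delbar operators:
   del a = sum_j d(a_I)/dz_j dz_j /\ e_I,  delbar a = sum_j d(a_I)/dzbar_j dzbar_j /\ e_I *)
Definition del (R : realType) (a : form R) : form R :=
  fun K x => \sum_(g in K) shuffle_sign R [set g] (K :\ g) *
     match @fintype.split 3 3 g with
     | inl j => dz j (a (K :\ g)) x
     | inr _ => 0
     end.
Definition delbar (R : realType) (a : form R) : form R :=
  fun K x => \sum_(g in K) shuffle_sign R [set g] (K :\ g) *
     match @fintype.split 3 3 g with
     | inl _ => 0
     | inr j => dzb j (a (K :\ g)) x
     end.

Definition omega_of (R : realType) (g : 'I_3 -> 'I_3 -> cfun R) : form R :=
  fun K x => \sum_(j < 3) \sum_(k < 3)
     (if K == [set (lshift 3 j : 'I_6); (rshift 3 k : 'I_6)]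
      then Complex 0 1 * g j k x else 0).

Definition hermitian_metric (R : realType) (g : 'I_3 -> 'I_3 -> cfun R) : Prop :=
  (forall j k, smoothC (g j k) /\ periodic (g j k)) /\
  (forall x : 'rV[R]_6,
     (forall j k, g k j x = conjc (g j k x)) /\
     (forall v : 'rV[R[i]]_3, v != 0 ->
        0 < \sum_(j < 3) \sum_(k < 3) v 0 j * g j k x * conjc (v 0 k))).

(* a (3,3)-form eta is > 0 : at every point it is a positive multiple of omega^3 *)
Definition positive_top (R : realType) (eta omega3 : form R) : Prop :=
  forall x : 'rV[R]_6, exists c : R, 0 < c /\
    forall K : {set 'I_6}, eta K x = Complex c 0 * omega3 K x.

(** The metric is [g(z) = 2 Id + e^{i θ} E_{12} + e^{-i θ} E_{21}] with [θ = 2π Re z_0]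
    (indices [0,1,2]); it is lattice periodic, and positive definite because
    [|e^{i θ}| = 1 < 2].  Only [g_{12}] and [g_{21}] are non-constant and they depend on
    [Re z_0] alone, where [∂_{z_0} ∂_{z̄_0} e^{±i θ} = -π² e^{±i θ}].  Hence
    [i ∂∂̄ω ∧ ω / 2] and [ω³ = 6 i det g dV = 36 i dV] are both constant multiples of the
    volume form, in the ratio [π²/36].  Every coefficient involved has the shape
    [a + b cos θ + c sin θ]; the sums over index tuples produced by [∂], [∂̄] and [∧] are
    reduced to their few non-zero terms by computation on the index sets. *)

From Pilot Require Import Defs.
From HB Require Import structures.
From mathcomp Require Import all_boot all_order all_algebra.
From mathcomp Require Import all_classical all_reals all_analysis.
From mathcomp Require Import complex ring lra.

Set Implicit Arguments.
Unset Strict Implicit.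
Unset Printing Implicit Defensive.
Import Order.TTheory GRing.Theory Num.Theory.
Import numFieldNormedType.Exports.
Local Open Scope ring_scope.

Section TrigonometricCoefficients.
Variable R : realType.

Definition coord0 (x : 'rV[R]_6) : R := x ord0 ord0.

Definition tau : R := pi *+ 2.

Definition theta (x : 'rV[R]_6) : R := tau * coord0 x.

Definition trig (p q r : R) (x : 'rV[R]_6) : R := p + q * cos (theta x) + r * sin (theta x).

Lemma coord0_ev (k : 'I_6) : coord0 (ev R k) = ((val k == 0)%N)%:R.
Proof. by rewrite /coord0 /ev mxE eqxx /= eq_sym. Qed.

Lemma diff_coord0 (x : 'rV[R]_6) : 'd coord0 x = coord0 :> ('rV[R]_6 -> R).
Proof.
have @f : {linear 'rV[R]_6 -> R}.
  by exists (fun N : 'rV[R]_6 => N ord0 ord0); do 2![eexists]; do ?[constructor];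
     rewrite ?mxE// => ? *; rewrite ?mxE//; move=> ?; rewrite !mxE.
by rewrite (_ : coord0 = f) //; apply: diff_lin; exact: coord_continuous.
Qed.

Section ThroughCoord0.
Variables (h : R -> R) (dh : R) (x : 'rV[R]_6).
Hypothesis h_derive : is_derive (coord0 x) 1 h dh.

Let h_diff : differentiable h (coord0 x).
Proof. by apply/derivable1_diffP; case: h_derive. Qed.

Lemma differentiable_coord0_comp : differentiable (h \o coord0) x.
Proof. exact/differentiable_comp/h_diff/differentiable_coord. Qed.

Lemma derive_coord0_comp (v : 'rV[R]_6) : 'D_v (h \o coord0) x = coord0 v * dh.
Proof.
rewrite deriveE; last exact: differentiable_coord0_comp.
rewrite diff_comp ?h_diff //; last exact: differentiable_coord.
by rewrite /= diff_coord0 diff1E ?h_diff // derive1E (@derive_val _ _ _ _ _ _ _ h_derive).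
Qed.

End ThroughCoord0.

Lemma is_derive_scale (w t : R) : is_derive t 1 (fun s => w * s) w.
Proof.
have := @is_deriveZ R R R id w t 1 1 (is_derive_id _ _).
by rewrite [w *: 1](mulr1 w).
Qed.

Lemma is_derive_cos_scale (w t : R) :
  is_derive t 1 (fun s => cos (w * s)) (- sin (w * t) * w).
Proof. exact: (is_derive1_comp (is_derive_cos _) (is_derive_scale w t)). Qed.

Lemma is_derive_sin_scale (w t : R) :
  is_derive t 1 (fun s => sin (w * s)) (cos (w * t) * w).
Proof. exact: (is_derive1_comp (is_derive_sin _) (is_derive_scale w t)). Qed.

Lemma differentiable_cos_theta x : differentiable (cos \o theta) x.
Proof. exact: (differentiable_coord0_comp (is_derive_cos_scale _ _)). Qed.

Lemma differentiable_sin_theta x : differentiable (sin \o theta) x.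
Proof. exact: (differentiable_coord0_comp (is_derive_sin_scale _ _)). Qed.

Lemma derive_cos_theta x v : 'D_v (cos \o theta) x = - (coord0 v * tau) * sin (theta x).
Proof. by rewrite (derive_coord0_comp (is_derive_cos_scale _ _)); ring. Qed.

Lemma derive_sin_theta x v : 'D_v (sin \o theta) x = coord0 v * tau * cos (theta x).
Proof. by rewrite (derive_coord0_comp (is_derive_sin_scale _ _)); ring. Qed.

Lemma trigE p q r : trig p q r = cst p + q \*: (cos \o theta) + r \*: (sin \o theta).
Proof. by []. Qed.

Lemma differentiable_trig p q r x : differentiable (trig p q r) x.
Proof.
rewrite trigE; apply: differentiableD; first apply: differentiableD.
- exact: differentiable_cst.
- exact/differentiableZ/differentiable_cos_theta.
- exact/differentiableZ/differentiable_sin_theta.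
Qed.

Lemma derive_trig p q r x v :
  'D_v (trig p q r) x = trig 0 (coord0 v * tau * r) (- (coord0 v * tau * q)) x.
Proof.
have dC := @diff_derivable R _ _ _ _ v (differentiable_cos_theta x).
have dS := @diff_derivable R _ _ _ _ v (differentiable_sin_theta x).
rewrite trigE deriveD; last exact: derivableZ.
  rewrite deriveD; last exact: derivableZ.
    rewrite derive_cst !deriveZ // derive_cos_theta derive_sin_theta.
    by rewrite /trig /GRing.scale /=; ring.
  exact: derivable_cst.
by apply: derivableD; [exact: derivable_cst | exact: derivableZ].
Qed.

Lemma iter_partial_trig (s : seq 'I_6) p q r :
  exists p' q' r', iter_partial s (trig p q r) = trig p' q' r'.
Proof.
elim: s => [|k s [p' [q' [r' IH]]]]; first by exists p, q, r.
exists 0, (coord0 (ev R k) * tau * r'), (- (coord0 (ev R k) * tau * q')).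
by apply/funext => y /=; rewrite IH derive_trig.
Qed.

Lemma smoothR_trig p q r : smoothR (trig p q r).
Proof.
move=> s x; have [p' [q' [r' ->]]] := iter_partial_trig s p q r.
exact: differentiable_trig.
Qed.

Lemma coord0_shift (x : 'rV[R]_6) k : coord0 (x + ev R k) = coord0 x + ((val k == 0)%N)%:R.
Proof. by rewrite -coord0_ev /coord0 mxE. Qed.

Lemma cos_theta_periodic x k : cos (theta (x + ev R k)) = cos (theta x).
Proof.
rewrite /theta coord0_shift; case: (val k == 0)%N; last by rewrite addr0.
by rewrite mulrDr mulr1 cosD2pi.
Qed.

Lemma sin_theta_periodic x k : sin (theta (x + ev R k)) = sin (theta x).
Proof.
rewrite /theta coord0_shift; case: (val k == 0)%N; last by rewrite addr0.
by rewrite mulrDr mulr1 sinD2pi.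
Qed.

End TrigonometricCoefficients.

Local Open Scope complex_scope.

Section ComplexTrigCoefficients.
Variable R : realType.

Definition ctrig (a b c : R[i]) : cfun R :=
  fun x => a + b * (cos (theta x))%:C + c * (sin (theta x))%:C.

Lemma ctrig_split a b c x :
  ctrig a b c x =
  Complex (trig (complex.Re a) (complex.Re b) (complex.Re c) x)
          (trig (complex.Im a) (complex.Im b) (complex.Im c) x).
Proof.
case: a => a1 a2; case: b => b1 b2; case: c => c1 c2.
by rewrite /ctrig /trig /=; simpc; congr Complex; ring.
Qed.

Lemma ctrig_scale (s a b c : R[i]) x :
  s * ctrig a b c x = ctrig (s * a) (s * b) (s * c) x.
Proof. by rewrite /ctrig !mulrDr !mulrA. Qed.

Lemma ctrig0 x : ctrig 0 0 0 x = 0.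
Proof. by rewrite /ctrig !mul0r !addr0. Qed.

Lemma sum_ctrig (I : finType) (P : pred I) (a b c : I -> R[i]) x :
  \sum_i (if P i then ctrig (a i) (b i) (c i) x else 0) =
  ctrig (\sum_i (if P i then a i else 0)) (\sum_i (if P i then b i else 0))
        (\sum_i (if P i then c i else 0)) x.
Proof.
rewrite /ctrig !mulr_suml -!big_split /=.
by apply: eq_bigr => i _; case: (P i); rewrite ?mul0r ?addr0.
Qed.

Lemma smoothC_ctrig a b c : smoothC (ctrig a b c).
Proof.
by split; [ rewrite (_ : (fun x => _) = trig (complex.Re a) (complex.Re b) (complex.Re c))
          | rewrite (_ : (fun x => _) = trig (complex.Im a) (complex.Im b) (complex.Im c))];
   try exact: smoothR_trig; apply/funext => y; rewrite ctrig_split.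
Qed.

Lemma periodic_ctrig a b c : Defs.periodic (ctrig a b c).
Proof. by move=> x k; rewrite /ctrig cos_theta_periodic sin_theta_periodic. Qed.

Lemma dreal_ctrig (k : 'I_6) a b c :
  dreal k (ctrig a b c) =
  ctrig 0 ((coord0 (ev R k) * tau R)%:C * c) (- ((coord0 (ev R k) * tau R)%:C * b)).
Proof.
apply/funext => x; rewrite /dreal.
rewrite (_ : (fun y => _) = trig (complex.Re a) (complex.Re b) (complex.Re c)); last first.
  by apply/funext => y; rewrite ctrig_split.
rewrite (_ : (fun y => _) = trig (complex.Im a) (complex.Im b) (complex.Im c)); last first.
  by apply/funext => y; rewrite ctrig_split.
rewrite !derive_trig ctrig_split.
case: a => a1 a2; case: b => b1 b2; case: c => c1 c2.
by congr Complex; rewrite /trig /=; ring.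
Qed.

(* On functions of [x_0] alone, [d/dz_0 = d/dzbar_0 = (1/2) d/dx_0] and the other
   Wirtinger derivatives vanish. *)
Definition wirtinger_coef (b : bool) : R[i] := (b%:R * (tau R / 2))%:C.

Lemma dz_ctrig (j : 'I_3) a b c :
  dz j (ctrig a b c) =
  ctrig 0 (wirtinger_coef (val j == 0)%N * c) (- (wirtinger_coef (val j == 0)%N * b)).
Proof.
apply/funext => x; rewrite /dz !dreal_ctrig !coord0_ev /= /wirtinger_coef !ctrig_split.
case: a => a1 a2; case: b => b1 b2; case: c => c1 c2.
by simpc; congr Complex; rewrite /trig /=; ring.
Qed.

Lemma dzb_ctrig (j : 'I_3) a b c :
  dzb j (ctrig a b c) =
  ctrig 0 (wirtinger_coef (val j == 0)%N * c) (- (wirtinger_coef (val j == 0)%N * b)).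
Proof.
apply/funext => x; rewrite /dzb !dreal_ctrig !coord0_ev /= /wirtinger_coef !ctrig_split.
case: a => a1 a2; case: b => b1 b2; case: c => c1 c2.
by simpc; congr Complex; rewrite /trig /=; ring.
Qed.

End ComplexTrigCoefficients.

Lemma subset_setD_eq (T : finType) (S U K : {set T}) :
  (S \subset K) && (K :\: S == U) = [disjoint S & U] && (K == S :|: U).
Proof.
apply/idP/idP.
- case/andP => sSK /eqP <-; apply/andP; split.
    by rewrite disjoint_sym finset.disjoints_subset finset.setDE finset.subsetIr.
  apply/eqP/setP => t; rewrite !inE.
  by case: (boolP (t \in S)) => //= /(fintype.subsetP sSK) ->.
- case/andP => dSU /eqP ->; rewrite finset.subsetUl /= finset.setDUl finset.setDv.
  by rewrite finset.set0U; apply/eqP/finset.setDidPl; rewrite disjoint_sym.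
Qed.

Lemma big_subset_pred1 (T : finType) (V : nmodType) (S K : {set T}) (X : {set T} -> V) :
  \sum_(L : {set T} | L \subset K) (if L == S then X L else 0) = if S \subset K then X S else 0.
Proof.
rewrite -big_mkcondr; case: (boolP (S \subset K)) => sSK.
  rewrite (eq_bigl (pred1 S)) ?big_pred1_eq // => L /=.
  by case: (L =P S) => [->|_]; rewrite ?sSK ?andbF.
by rewrite big_pred0 // => L; case: (L =P S) => [->|_]; rewrite ?andbF ?andbT ?(negbTE sSK).
Qed.

Lemma sum_if_mulr (V : pzSemiRingType) (I : finType) (P : pred I) (f : I -> V) k :
  k * \sum_i (if P i then f i else 0) = \sum_i (if P i then k * f i else 0).
Proof. by rewrite mulr_sumr; apply: eq_bigr => i _; case: (P i); rewrite ?mulr0. Qed.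

Section MonomialForms.
Variable R : realType.

Definition monomials (I : finType) (S : I -> {set 'I_6}) (F : I -> cfun R) : Defs.form R :=
  fun K x => \sum_i (if K == S i then F i x else 0).

Lemma wedge_monomials (I J : finType) (S : I -> {set 'I_6}) (F : I -> cfun R)
    (T : J -> {set 'I_6}) (G : J -> cfun R) :
  wedge (monomials S F) (monomials T G) =
  monomials (fun p : I * J => S p.1 :|: T p.2)
     (fun p x => if [disjoint S p.1 & T p.2]
                 then shuffle_sign R (S p.1) (T p.2) * F p.1 x * G p.2 x else 0).
Proof.
apply/funext => K; apply/funext => x; rewrite /wedge /monomials.
under eq_bigr => L _ do rewrite -mulrA big_distrlr mulr_sumr.
under eq_bigr => L _ do under eq_bigr => i _ do rewrite mulr_sumr.
rewrite exchange_big /=; under eq_bigr => i _ do rewrite exchange_big /=.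
rewrite pair_bigA /=; apply: eq_bigr => [[i j]] _ /=.
rewrite (eq_bigr (fun L => if L == S i then
    (if K :\: L == T j then shuffle_sign R L (K :\: L) * F i x * G j x else 0) else 0));
  last first.
  move=> L _; case: eqP => [->|_]; last by rewrite mul0r mulr0.
  by case: eqP => _; rewrite ?mulr0 ?mul0r ?mulr1 // !mulrA.
rewrite big_subset_pred1; have := subset_setD_eq (S i) (T j) K.
case: (S i \subset K) => /=; last by case: [disjoint _ & _]; case: (K == _).
case: eqP => [<- /esym /andP [-> ->] // | _ /esym].
by case: [disjoint _ & _]; case: (K == _).
Qed.

Definition trig_monomials (I : finType) (S : I -> {set 'I_6}) (a b c : I -> R[i]) :=
  monomials S (fun i => ctrig (a i) (b i) (c i)).

Lemma trig_monomialsE (I : finType) (S : I -> {set 'I_6}) (a b c : I -> R[i]) K :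
  trig_monomials S a b c K = ctrig (\sum_i (if K == S i then a i else 0))
                                   (\sum_i (if K == S i then b i else 0))
                                   (\sum_i (if K == S i then c i else 0)).
Proof. by apply/funext => x; rewrite -sum_ctrig. Qed.

Definition first_order (D : 'I_6 -> cfun R -> cfun R) (a : Defs.form R) : Defs.form R :=
  fun K x => \sum_(g in K) shuffle_sign R [set g] (K :\ g) * D g (a (K :\ g)) x.

Lemma coef_setU1 (I : finType) (g : 'I_6) (K : {set 'I_6}) (S : I -> {set 'I_6})
    (f : I -> R[i]) (s : {set 'I_6} -> R[i]) :
  (if g \in K then s (K :\ g) * \sum_i (if K :\ g == S i then f i else 0) else 0)
  = \sum_i (if K == g |: S i then (if g \in S i then 0 else s (S i) * f i) else 0).
Proof.
rewrite (_ : (if g \in K then _ else 0) =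
  \sum_i (if (g \in K) && (K :\ g == S i) then s (K :\ g) * f i else 0)); last first.
  by case: (g \in K) => /=; [rewrite sum_if_mulr | rewrite big1].
apply: eq_bigr => i _; have := subset_setD_eq [set g] (S i) K.
rewrite finset.sub1set finset.disjoints1.
case: (g \in K) => /=; last by case: (g \in S i); case: (K == _).
case: eqP => [<- /esym /andP [/negbTE -> ->] // | _ /esym].
by case: (g \in S i); case: (K == _).
Qed.

Lemma first_order_trig_monomials (D : 'I_6 -> cfun R -> cfun R) (d : 'I_6 -> R[i]) :
  (forall g a b c, D g (ctrig a b c) = ctrig 0 (d g * c) (- (d g * b))) ->
  forall (I : finType) (S : I -> {set 'I_6}) (a b c : I -> R[i]),
  first_order D (trig_monomials S a b c) =
  trig_monomials (fun p : I * 'I_6 => p.2 |: S p.1) (fun _ => 0)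
    (fun p => if p.2 \in S p.1 then 0 else shuffle_sign R [set p.2] (S p.1) * (d p.2 * c p.1))
    (fun p => if p.2 \in S p.1 then 0 else shuffle_sign R [set p.2] (S p.1) * - (d p.2 * b p.1)).
Proof.
move=> DE I S a b c; apply/funext => K; apply/funext => x.
rewrite /first_order big_mkcond /=.
under eq_bigr => g _ do rewrite trig_monomialsE DE ctrig_scale.
rewrite sum_ctrig trig_monomialsE; congr ctrig.
- by rewrite !big1 // => ? _; case: ifP; rewrite ?mulr0.
- under eq_bigr => g _ do
    rewrite sum_if_mulr (coef_setU1 g K S (fun i => d g * c i) (shuffle_sign R [set g])).
  by rewrite exchange_big pair_bigA.
- under eq_bigr => g _ do
    rewrite -mulNr sum_if_mulr
            (coef_setU1 g K S (fun i => - d g * b i) (shuffle_sign R [set g])).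
  by rewrite exchange_big pair_bigA; apply: eq_bigr => p _; rewrite mulNr.
Qed.

End MonomialForms.

(* [{set _}] is locked, so set identities between concrete index sets are decided by
   [vm_compute] on the lists of values they are built from. *)
Definition nset (s : seq nat) : {set 'I_6} := [set g : 'I_6 | val g \in s].

Lemma mem_nset (g : 'I_6) s : (g \in nset s) = (val g \in s).
Proof. by rewrite inE. Qed.

Lemma set1_nset (g : 'I_6) : [set g] = nset [:: val g].
Proof. by apply/setP => t; rewrite !inE val_eqE. Qed.

Lemma setU1_nset (g : 'I_6) s : g |: nset s = nset (val g :: s).
Proof. by apply/setP => t; rewrite !inE val_eqE. Qed.

Lemma setU_nset s1 s2 : nset s1 :|: nset s2 = nset (s1 ++ s2).
Proof. by apply/setP => t; rewrite !inE mem_cat. Qed.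

Definition disjointn (s1 s2 : seq nat) : bool :=
  all (fun t => ~~ ((t \in s1) && (t \in s2))) (iota 0 6).

Lemma disjoint_nset s1 s2 : [disjoint nset s1 & nset s2] = disjointn s1 s2.
Proof.
apply/pred0P/allP => [H t | H t /=].
- rewrite mem_iota add0n => /andP [_ ht].
  by have := H (Ordinal ht); rewrite /= !inE => ->.
- by rewrite !inE; apply/negbTE/H; rewrite mem_iota add0n ltn_ord.
Qed.

Definition fulln (s : seq nat) : bool := all (mem s) (iota 0 6).

Lemma nset_full s : fulln s -> nset s = [set: 'I_6].
Proof.
move=> /allP sF; apply/setP => t; rewrite !inE; apply: sF.
by rewrite mem_iota add0n ltn_ord.
Qed.

Definition inversions (s1 s2 : seq nat) : nat :=
  count (fun p => [&& p.1 \in s1, p.2 \in s2 & p.2 < p.1]%N)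
        [seq (a, b) | a <- iota 0 6, b <- iota 0 6].

Lemma sum_ord6 (F : nat -> nat) : (\sum_(a < 6) F a = \sum_(a <- iota 0 6) F a)%N.
Proof. by rewrite -(big_mkord xpredT). Qed.

Lemma shuffle_sign_nset (R : realType) s1 s2 :
  shuffle_sign R (nset s1) (nset s2) = (-1) ^+ inversions s1 s2.
Proof.
rewrite /shuffle_sign /inversions; congr (_ ^+ _).
pose F (a b : nat) := if [&& a \in s1, b \in s2 & (b < a)%N] then 1%N else 0%N.
rewrite -sum1_count [RHS]big_mkcond big_allpairs -sum1_card [LHS]big_mkcond.
rewrite (eq_bigr (fun p : 'I_6 * 'I_6 => F p.1 p.2)); last by move=> [a b] _; rewrite !inE.
rewrite -(pair_bigA _ (fun a b : 'I_6 => F a b)) (sum_ord6 (fun a => \sum_(b < 6) F a b)).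
by apply: eq_bigr => a _; rewrite (sum_ord6 (F a)).
Qed.

Definition enumeration (T : finType) (L : seq T) := uniq L /\ forall x, x \in L.

Lemma big_enumeration (V : nmodType) (T : finType) (L : seq T) (F : T -> V) :
  enumeration L -> \sum_x F x = \sum_(x <- L) F x.
Proof.
case=> uL mL; rewrite -big_enum /=; apply: perm_big.
by apply: uniq_perm => //; [exact: enum_uniq | move=> x; rewrite mem_enum mL].
Qed.

Lemma enumeration_pairs (T1 T2 : finType) (L1 : seq T1) (L2 : seq T2) :
  enumeration L1 -> enumeration L2 -> enumeration [seq (a, b) | a <- L1, b <- L2].
Proof.
move=> [u1 m1] [u2 m2]; split=> [|[a b]]; last exact: allpairs_f.
by apply: allpairs_uniq => // -[? ?] [? ?] _ _ [-> ->].
Qed.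

(* Explicit literals: [enum 'I_n] does not reduce under [vm_compute]. *)
Definition ord3 : seq 'I_3 := [:: @Ordinal 3 0 isT; @Ordinal 3 1 isT; @Ordinal 3 2 isT].
Definition ord6 : seq 'I_6 :=
  [:: @Ordinal 6 0 isT; @Ordinal 6 1 isT; @Ordinal 6 2 isT;
      @Ordinal 6 3 isT; @Ordinal 6 4 isT; @Ordinal 6 5 isT].

Lemma enumeration_ord3 : enumeration ord3.
Proof. by split=> // -[[|[|[|?]]] ?]. Qed.

Lemma enumeration_ord6 : enumeration ord6.
Proof. by split=> // -[[|[|[|[|[|[|?]]]]]] ?]. Qed.

Lemma sum_supported_on_full (V : nmodType) (T : eqType) (L : seq T) (s : T -> seq nat)
    (Q : pred T) (G : T -> V) (K : {set 'I_6}) :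
  all (fun p => Q p ==> fulln (s p)) L -> (forall p, ~~ Q p -> G p = 0) ->
  \sum_(p <- L) (if K == nset (s p) then G p else 0) =
  if K == [set: 'I_6] then \sum_(p <- seq.filter Q L) G p else 0.
Proof.
move=> /allP QF G0; rewrite big_filter.
rewrite (eq_big_seq (fun p => if Q p then (if K == [set: 'I_6] then G p else 0) else 0)).
  by case: eqP => _; [rewrite -big_mkcond | rewrite big1 // => p _; rewrite if_same].
move=> p pL; case: (boolP (Q p)) => Qp; last by rewrite G0 //; case: ifP.
by rewrite nset_full //; exact: (implyP (QF p pL)).
Qed.

Lemma big_foldr (V : nmodType) (T : Type) (t : seq T) (G : T -> V) :
  \sum_(p <- t) G p = foldr (fun p acc => G p + acc) 0 t.
Proof. by rewrite unlock. Qed.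

(* Replaces [seq.filter Q L] by the concrete list it computes to and unfolds the sum over
   it; going through [foldr] avoids rewriting [big_cons] once per term. *)
Ltac expand_filtered_sum :=
  match goal with |- context [seq.filter ?Q ?L] =>
    let t := eval vm_compute in (seq.filter Q L) in
    rewrite (_ : seq.filter Q L = t); last by vm_compute
  end;
  rewrite big_foldr; cbn [foldr].

Section DolbeaultOnTrig.
Variable R : realType.

Definition del_part (g : 'I_6) (f : cfun R) : cfun R :=
  fun x => match @fintype.split 3 3 g with inl j => dz j f x | inr _ => 0 end.
Definition delbar_part (g : 'I_6) (f : cfun R) : cfun R :=
  fun x => match @fintype.split 3 3 g with inl _ => 0 | inr j => dzb j f x end.

Lemma del_first_order (a : Defs.form R) : del a = first_order del_part a.
Proof. by []. Qed.

Lemma delbar_first_order (a : Defs.form R) : delbar a = first_order delbar_part a.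
Proof. by []. Qed.

Lemma wirtinger_coef_false : wirtinger_coef R false = 0.
Proof. by rewrite /wirtinger_coef mul0r. Qed.

Lemma del_part_ctrig g a b c :
  del_part g (ctrig a b c) =
  ctrig 0 (wirtinger_coef R (nat_of_ord g == 0)%N * c)
          (- (wirtinger_coef R (nat_of_ord g == 0)%N * b)).
Proof.
rewrite /del_part; case: splitP => j ->; first exact: dz_ctrig.
by apply/funext => x; rewrite wirtinger_coef_false !mul0r oppr0 ctrig0.
Qed.

Lemma delbar_part_ctrig g a b c :
  delbar_part g (ctrig a b c) =
  ctrig 0 (wirtinger_coef R (nat_of_ord g == 3)%N * c)
          (- (wirtinger_coef R (nat_of_ord g == 3)%N * b)).
Proof.
rewrite /delbar_part; case: splitP => j ->; last exact: dzb_ctrig.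
by apply/funext => x; rewrite /= ltn_eqF ?ltn_ord // wirtinger_coef_false !mul0r oppr0 ctrig0.
Qed.

End DolbeaultOnTrig.

Section Metric.
Variable R : realType.

Definition metric_const (j k : 'I_3) : R[i] := if val j == val k then 2 else 0.
Definition metric_cos (j k : 'I_3) : R[i] := if (val j + val k == 3)%N then 1 else 0.
Definition metric_sin (j k : 'I_3) : R[i] :=
  match val j, val k with 1%N, 2%N => 'i | 2%N, 1%N => - 'i | _, _ => 0 end.

Definition metric (j k : 'I_3) : cfun R :=
  ctrig (metric_const j k) (metric_cos j k) (metric_sin j k).

Definition set11 (p : 'I_3 * 'I_3) : {set 'I_6} := [set lshift 3 p.1; rshift 3 p.2].

Lemma set11_nset p : set11 p = nset [:: val p.1; (3 + val p.2)%N].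
Proof. by apply/setP => t; rewrite !inE -!val_eqE. Qed.

Lemma omega_metricE :
  omega_of metric = trig_monomials set11 (fun p => 'i * metric_const p.1 p.2)
                      (fun p => 'i * metric_cos p.1 p.2) (fun p => 'i * metric_sin p.1 p.2).
Proof.
apply/funext => K; apply/funext => x.
rewrite /omega_of /trig_monomials /monomials pair_bigA /=; apply: eq_bigr => -[j k] _ /=.
by rewrite /metric ctrig_scale.
Qed.

Let enumeration_ord3_sq : enumeration [seq (a, b) | a <- ord3, b <- ord3].
Proof. exact: enumeration_pairs enumeration_ord3 enumeration_ord3. Qed.

Definition cube_support (p : ('I_3 * 'I_3) * (('I_3 * 'I_3) * ('I_3 * 'I_3))) : bool :=
  let s p := [:: val p.1; (3 + val p.2)%N] in
  disjointn (s p.1) (s p.2.1 ++ s p.2.2) && disjointn (s p.2.1) (s p.2.2).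

Lemma omega_cube_coef K x :
  wedge (omega_of metric) (wedge (omega_of metric) (omega_of metric)) K x =
  if K == [set: 'I_6] then 'i * (12 * (4 - (cos (theta x) ^+ 2 + sin (theta x) ^+ 2)))%:C
  else 0.
Proof.
rewrite omega_metricE /trig_monomials !wedge_monomials /monomials.
rewrite (big_enumeration _ (enumeration_pairs enumeration_ord3_sq
                             (enumeration_pairs enumeration_ord3_sq enumeration_ord3_sq))).
under eq_bigr => p _ do rewrite !set11_nset !setU_nset !disjoint_nset !shuffle_sign_nset.
rewrite (sum_supported_on_full (Q := cube_support)); first last.
- by move=> p /nandP[] /negbTE ->; rewrite ?mulr0 ?if_same.
- by vm_compute.
expand_filtered_sum; case: (K == _) => //.
rewrite /metric_const /metric_cos /metric_sin /inversions /= !addnE /=.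
rewrite !mulr0 !ctrig0 ?mulr0 ?mul0r ?addr0 ?add0r /ctrig.
by apply/eqP; rewrite eq_complex /=; apply/andP; split; apply/eqP; ring.
Qed.

Definition ddbar_support (p : ('I_3 * 'I_3) * 'I_6 * 'I_6 * ('I_3 * 'I_3)) : bool :=
  let s p := [:: val p.1; (3 + val p.2)%N] in
  [&& disjointn [:: val p.1.2, val p.1.1.2 & s p.1.1.1] (s p.2),
      val p.1.2 \notin val p.1.1.2 :: s p.1.1.1, val p.1.1.2 \notin s p.1.1.1,
      nat_of_ord p.1.1.2 == 3 & nat_of_ord p.1.2 == 0]%N.

Lemma ddbar_omega_wedge_omega_coef K x :
  wedge (del (delbar (omega_of metric))) (omega_of metric) K x =
  if K == [set: 'I_6] then (tau R ^+ 2 / 2 * (cos (theta x) ^+ 2 + sin (theta x) ^+ 2))%:C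
  else 0.
Proof.
rewrite omega_metricE delbar_first_order (first_order_trig_monomials (@delbar_part_ctrig R)).
rewrite del_first_order (first_order_trig_monomials (@del_part_ctrig R)).
rewrite /trig_monomials !wedge_monomials /monomials.
rewrite (big_enumeration _ (enumeration_pairs (enumeration_pairs (enumeration_pairs
           enumeration_ord3_sq enumeration_ord6) enumeration_ord6) enumeration_ord3_sq)).
under eq_bigr => p _ do rewrite !set11_nset !setU1_nset !setU_nset !set1_nset !mem_nset
                                !disjoint_nset !shuffle_sign_nset.
rewrite (sum_supported_on_full (Q := ddbar_support)); first last.
- by move=> p /nandP[/negbTE-> | /nandP[/negPn-> | /nandP[/negPn-> | /nandP[]/negbTE->]]];
    rewrite ?wirtinger_coef_false ?(mul0r, mulr0, oppr0, if_same, ctrig0).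
- by vm_compute.
expand_filtered_sum; case: (K == _) => //.
rewrite /metric_const /metric_cos /metric_sin /inversions /= !addnE /= !eqxx.
rewrite /wirtinger_coef /ctrig.
by apply/eqP; rewrite eq_complex /=; apply/andP; split; apply/eqP; field.
Qed.

End Metric.

Section HermitianMetric.
Variable R : realType.

Lemma metric_hermitian j k x : metric k j x = conjc (metric j k x) :> R[i].
Proof.
case: j => [[|[|[|?]]] ?] //; case: k => [[|[|[|?]]] ?] //;
  rewrite /metric /metric_const /metric_cos /metric_sin /ctrig /=; simpc => //;
  by congr Complex; ring.
Qed.

Definition sqnorm (z : R[i]) : R := complex.Re z ^+ 2 + complex.Im z ^+ 2.

Lemma sqnorm_ge0 z : 0 <= sqnorm z.
Proof. by rewrite addr_ge0 ?sqr_ge0. Qed.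

Lemma sqnorm_gt0 z : z != 0 -> 0 < sqnorm z.
Proof.
case: z => a b nz; rewrite lt_def sqnorm_ge0 andbT.
apply: contra nz; rewrite /sqnorm /= paddr_eq0 ?sqr_ge0 // !sqrf_eq0.
by case/andP => /eqP -> /eqP ->.
Qed.

Lemma rowv_neq0 (V : nmodType) (n : nat) (v : 'rV[V]_n) : v != 0 -> exists j, v 0 j != 0.
Proof.
move=> vn0; apply/existsP; apply: contraNT vn0; rewrite negb_exists => /forallP v0.
by apply/eqP/matrixP => i j; rewrite (ord1 i) mxE; apply/eqP; rewrite -[_ == _]negbK v0.
Qed.

Lemma metric_positive x (v : 'rV[R[i]]_3) : v != 0 ->
  0 < \sum_(j < 3) \sum_(k < 3) v 0 j * metric j k x * conjc (v 0 k).
Proof.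
move=> /rowv_neq0 [j vj0].
have sq_pos : 0 < \sum_j sqnorm (v 0 j).
  apply: (lt_le_trans (sqnorm_gt0 vj0)); rewrite (bigD1 j) //= lerDl.
  by rewrite sumr_ge0 // => *; exact: sqnorm_ge0.
rewrite !big_ord_recl !big_ord0 !addr0 /= in sq_pos *.
rewrite /metric /metric_const /metric_cos /metric_sin /ctrig /=.
move: sq_pos; rewrite /sqnorm.
case: (v 0 ord0) => p0 q0; case: (v 0 _) => p1 q1; case: (v 0 _) => p2 q2 /= sq_pos.
rewrite ltcE /=; apply/andP; split; first by apply/eqP; ring.
set C := cos (theta x); set S := sin (theta x).
suff SOS_pos : forall t, t = 2 * (p0 ^+ 2 + q0 ^+ 2) + (p1 ^+ 2 + q1 ^+ 2) + (p2 ^+ 2 + q2 ^+ 2)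
   + (p1 + C * p2 + S * q2) ^+ 2 + (q1 + C * q2 - S * p2) ^+ 2
   + (1 - (C ^+ 2 + S ^+ 2)) * (p2 ^+ 2 + q2 ^+ 2) -> 0 < t.
  by apply: SOS_pos; ring.
move=> t ->; rewrite cos2Dsin2 subrr mul0r addr0.
have := sqr_ge0 (p1 + C * p2 + S * q2); have := sqr_ge0 (q1 + C * q2 - S * p2).
have := sqr_ge0 p0; have := sqr_ge0 q0.
lra.
Qed.

Lemma metric_is_hermitian_metric : hermitian_metric (@metric R).
Proof.
split=> [j k | x]; first by split; [exact: smoothC_ctrig | exact: periodic_ctrig].
split=> [j k | v]; [exact: metric_hermitian | exact: metric_positive].
Qed.

End HermitianMetric.

Unset Implicit Arguments.
Set Strict Implicit.

Theorem proposition18 (R : realType) :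
  exists g : 'I_3 -> 'I_3 -> cfun R,
    hermitian_metric g /\
    positive_top
      (scale_form (Complex 0 (1/2)) (wedge (del (delbar (omega_of g))) (omega_of g)))
      (wedge (omega_of g) (wedge (omega_of g) (omega_of g))).
Proof.
exists (@metric R); split; first exact: metric_is_hermitian_metric.
move=> x; exists (tau R ^+ 2 / 144); split.
  by rewrite divr_gt0 ?exprn_gt0 ?ltr0n // pmulrn_lgt0 ?pi_gt0.
move=> K; rewrite /scale_form ddbar_omega_wedge_omega_coef omega_cube_coef.
case: (K == _); last by rewrite !mulr0.
rewrite cos2Dsin2; apply/eqP; rewrite eq_complex /=.
by apply/andP; split; apply/eqP; field.
Qed.
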